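(* Let $\mathcal{A}$ be an association scheme with splitting field $L$, and let $E\subseteq\mathbb{C}$ be a field containing $L$ and closed under complex conjugation. For any Bose–Mesner algebra automorphism $\psi$ of $E[\mathcal{A}]$, the fixed-point space $\{M\in E[\mathcal{A}]: M^\psi=M\}$ equals $E[\mathcal{B}]$ for some subscheme $\mathcal{B}$ of $\mathcal{A}$.
   Context: An association scheme on $v$ vertices is a set $\mathcal{A}=\{A_0,\ldots,A_d\}$ of $v\times v$ $(0,1)$-matrices with $A_0=I$, $\sum_iA_i=J$, closed under transpose, pairwise commuting, and with all products $A_iA_j$ in the span of $\mathcal{A}$. Its principal idempotents are the pairwise orthogonal Hermitian idempotents $E_0,\dots,E_d$ summing to $I$ that form a basis of the span, with $A_iE_j=p_i(j)E_j$; the splitting field $L$ is $\mathbb{Q}(p_i(j):i,j)$. $E[\mathcal{A}]$ is the $E$-span of $\mathcal{A}$; $\circ$ is the Schur product. A Bose–Mesner algebra automorphism of $E[\mathcal{A}]$ is an invertible $E$-linear map $\psi$ with $(MN)^\psi=M^\psi N^\psi$, $(M\circ N)^\psi=M^\psi\circ N^\psi$ and $(M^* )^\psi=(M^\psi)^*$. A subscheme (fusion scheme) of $\mathcal{A}$ is an association scheme $\mathcal{B}=\{B_0,\ldots,B_e\}$ with $B_0=I$ and each $B_i=\sum_{j\in C_i}A_j$ for a partition $\{C_0=\{0\},C_1,\ldots,C_e\}$ of $\{0,\ldots,d\}$. *)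

From mathcomp Require Import all_boot all_order all_algebra.
From mathcomp Require Import complex Rstruct.
Set Implicit Arguments.
Unset Strict Implicit.
Unset Printing Implicit Defensive.
Import GRing.Theory Num.Theory.
Local Open Scope ring_scope.

Definition CC : numClosedFieldType := (Rdefinitions.R)[i].

Definition schur v (M N : 'M[CC]_v) : 'M[CC]_v := \matrix_(r, s) (M r s * N r s).

Definition ctrmx v (M : 'M[CC]_v) : 'M[CC]_v := (map_mx Num.conj M)^T.

Definition conj_closed_subfield (E : {pred CC}) : Prop :=
  GRing.divring_closed E /\ (forall z, z \in E -> z^* \in E).

Definition span_in (K : {pred CC}) v n (A : 'I_n -> 'M[CC]_v) (M : 'M[CC]_v) : Prop :=
  exists c : 'I_n -> CC, (forall i, c i \in K) /\ M = \sum_(i < n) c i *: A i.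

Definition cspan v n (A : 'I_n -> 'M[CC]_v) (M : 'M[CC]_v) : Prop :=
  span_in predT A M.

Definition is_assoc_scheme v d (A : 'I_d.+1 -> 'M[CC]_v) : Prop :=
  (forall i r s, A i r s = 0 \/ A i r s = 1) /\
  (forall i, A i != 0) /\
  A ord0 = 1%:M /\
  (\sum_(i < d.+1) A i = const_mx 1) /\
  (forall i, exists j, (A i)^T = A j) /\
  (forall i j, A i *m A j = A j *m A i) /\
  (forall i j, cspan A (A i *m A j)).

Definition principal_idempotents v d (A : 'I_d.+1 -> 'M[CC]_v)
    (Eid : 'I_d.+1 -> 'M[CC]_v) (p : 'I_d.+1 -> 'I_d.+1 -> CC) : Prop :=
  (forall j, Eid j *m Eid j = Eid j) /\
  (forall j k, j != k -> Eid j *m Eid k = 0) /\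
  (forall j, ctrmx (Eid j) = Eid j) /\
  (\sum_(j < d.+1) Eid j = 1%:M) /\
  (* {Eid_j} is a basis of the (complex) span of A *)
  (forall j, cspan A (Eid j)) /\
  (forall i, cspan Eid (A i)) /\
  (forall c : 'I_d.+1 -> CC, \sum_(j < d.+1) c j *: Eid j = 0 ->
     forall j, c j = 0) /\
  (forall i j, A i *m Eid j = p i j *: Eid j).

(* The splitting field L = Q(p_i(j)) of A is contained in the subfield E
   (E contains Q, so this says every eigenvalue p_i(j) lies in E). *)
Definition splitting_field_in v d (A : 'I_d.+1 -> 'M[CC]_v) (E : {pred CC}) : Prop :=
  exists Eid p, principal_idempotents A Eid p /\ (forall i j, p i j \in E).

Definition BM_automorphism (E : {pred CC}) v d (A : 'I_d.+1 -> 'M[CC]_v)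
    (psi : 'M[CC]_v -> 'M[CC]_v) : Prop :=
  (forall M, span_in E A M -> span_in E A (psi M)) /\
  (forall a M N, a \in E -> span_in E A M -> span_in E A N ->
     psi (a *: M + N) = a *: psi M + psi N) /\
  (forall M N, span_in E A M -> span_in E A N -> psi M = psi N -> M = N) /\
  (forall N, span_in E A N -> exists2 M, span_in E A M & psi M = N) /\
  (forall M N, span_in E A M -> span_in E A N -> psi (M *m N) = psi M *m psi N) /\
  (forall M N, span_in E A M -> span_in E A N -> psi (schur M N) = schur (psi M) (psi N)) /\
  (forall M, span_in E A M -> psi (ctrmx M) = ctrmx (psi M)).

Definition fusion v d e (A : 'I_d.+1 -> 'M[CC]_v) (Cl : 'I_e.+1 -> {set 'I_d.+1}) :
    'I_e.+1 -> 'M[CC]_v :=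
  fun k => \sum_(j in Cl k) A j.

Definition is_subscheme v d e (A : 'I_d.+1 -> 'M[CC]_v) (Cl : 'I_e.+1 -> {set 'I_d.+1}) : Prop :=
  [/\ Cl ord0 = [set ord0],
      (forall k, Cl k != set0),
      (forall j, exists k, j \in Cl k),
      (forall k l, k != l -> [disjoint Cl k & Cl l])
    & is_assoc_scheme (fusion A Cl)].

From HB Require Import structures.
From mathcomp Require Import all_boot all_order all_algebra.
From mathcomp Require Import complex Rstruct.
Import GRing.Theory Num.Theory.
Local Open Scope ring_scope.
Set Implicit Arguments.
Unset Strict Implicit.

(* A Bose-Mesner automorphism [psi] preserves the Schur product, so it maps
   the primitive Schur idempotents [A i] of [E[A]] to pairwise Schur-orthogonal
   nonzero Schur idempotents; these can only be the [A i] again, permuted by some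
   [sg].  A matrix of [E[A]] is then fixed by [psi] exactly when its coordinates
   are constant on the orbits of [sg], i.e. when it lies in the span of the orbit
   sums.  The orbit of [0] is [{0}] because [psi] fixes [I], transposition
   commutes with [sg] because [psi] commutes with [^*], and the fixed space is
   closed under products; hence the orbit sums form a fusion scheme. *)

Lemma sum_scale_delta (R : pzRingType) (V : lmodType R) (I : finType)
    (F : I -> V) (k : I) :
  \sum_l (l == k)%:R *: F l = F k.
Proof.
rewrite (bigD1 k) //= eqxx scale1r big1 ?addr0 // => l /negPf ->.
by rewrite scale0r.
Qed.

Lemma orthogonal_idempotents_perm (R : idomainType) (I : finType)
    (c : I -> I -> R) :
  (forall i k, c i k * c i k = c i k) ->
  (forall i j k, i != j -> c i k * c j k = 0) ->
  (forall i, exists k, c i k != 0) ->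
  exists2 sg : I -> I, injective sg & forall i k, c i k = (k == sg i)%:R.
Proof.
move=> c_idem c_orth c_neq0.
pose sg i := xchoose (c_neq0 i).
have sgP i : c i (sg i) != 0 := xchooseP (c_neq0 i).
have c_sg i : c i (sg i) = 1 by apply: (mulIf (sgP i)); rewrite mul1r c_idem.
have sg_inj : injective sg.
  move=> i j eq_sg; apply/eqP; apply: contraT => /(c_orth i j (sg i))/eqP.
  by rewrite {2}eq_sg mulf_eq0 (negPf (sgP i)) (negPf (sgP j)).
exists sg => // i k; case: eqVneq => [->|k_sg]; first by rewrite c_sg.
rewrite -(f_invF sg_inj k) in k_sg *; set j := invF sg_inj k in k_sg *.
have ij : i != j by apply: contraNneq k_sg => ->.
by rewrite -[LHS]mulr1 -(c_sg j) c_orth.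
Qed.

Section SchemeCoordinates.

Variables (v d : nat) (A : 'I_d.+1 -> 'M[CC]_v).
(* [rho r s] is the relation containing the pair [(r, s)] and [cell k] is a pair
   in relation [k]; coordinates in the basis [A] are read off at these cells. *)
Variable rho : 'I_v -> 'I_v -> 'I_d.+1.
Hypothesis A_rho : forall i r s, A i r s = (i == rho r s)%:R.
Variable cell : 'I_d.+1 -> 'I_v * 'I_v.
Hypothesis rho_cell : forall k, rho (cell k).1 (cell k).2 = k.

Definition coord (M : 'M[CC]_v) k : CC := M (cell k).1 (cell k).2.

Lemma comb_entry (c : 'I_d.+1 -> CC) r s : (\sum_j c j *: A j) r s = c (rho r s).
Proof.
rewrite summxE (bigD1 (rho r s)) //= big1 ?addr0 => [|j /negPf rho_j].
  by rewrite mxE A_rho eqxx mulr1.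
by rewrite mxE A_rho rho_j mulr0.
Qed.

Lemma coord_comb c k : coord (\sum_j c j *: A j) k = c k.
Proof. by rewrite /coord comb_entry rho_cell. Qed.

Lemma coord_A i k : coord (A i) k = (i == k)%:R.
Proof. by rewrite /coord A_rho rho_cell. Qed.

Lemma A_inj : injective A.
Proof.
move=> i j /(congr1 (coord^~ i)); rewrite !coord_A eqxx.
by case: eqVneq => // _ /eqP; rewrite oner_eq0.
Qed.

Lemma coord_comb_perm (sg : 'I_d.+1 -> 'I_d.+1) c j :
  injective sg -> coord (\sum_i c i *: A (sg i)) (sg j) = c j.
Proof.
move=> sg_inj; rewrite /coord summxE (bigD1 j) //= big1 ?addr0 => [|i ij].
  by rewrite mxE A_rho rho_cell eqxx mulr1.
by rewrite mxE A_rho rho_cell (inj_eq sg_inj) (negPf ij) mulr0.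
Qed.

Lemma schur_A i j : schur (A i) (A j) = (i == j)%:R *: A i.
Proof.
apply/matrixP=> r s; rewrite !mxE !A_rho.
case: (eqVneq i (rho r s)) => [->|_]; first by rewrite eq_sym mulr1 mul1r.
by rewrite mul0r mulr0.
Qed.

Lemma ctrmx_A i : ctrmx (A i) = (A i)^T.
Proof.
apply/matrixP=> r s; rewrite !mxE A_rho.
by case: (_ == _); rewrite ?conjC0 ?conjC1.
Qed.

Section Span.

Variable E : semiringClosed CC.

Lemma span_in_coord M : span_in E A M ->
  M = \sum_j coord M j *: A j /\ forall j, coord M j \in E.
Proof.
case=> c [cE ->]; split=> [|j]; last by rewrite coord_comb.
by apply: eq_bigr => j _; rewrite coord_comb.
Qed.

Lemma span0 : span_in E A 0.
Proof.
exists (fun=> 0); split=> [j|]; first exact: rpred0.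
by rewrite big1 // => j _; rewrite scale0r.
Qed.

Lemma spanA i : span_in E A (A i).
Proof.
exists (fun j => (j == i)%:R).
by rewrite sum_scale_delta; split=> // j; apply: rpred_nat.
Qed.

Lemma spanD M N : span_in E A M -> span_in E A N -> span_in E A (M + N).
Proof.
move=> [a [aE ->]] [b [bE ->]]; exists (fun j => a j + b j).
split=> [j|]; first by rewrite rpredD.
by rewrite -big_split; apply: eq_bigr => j _; rewrite scalerDl.
Qed.

Lemma spanZ x M : x \in E -> span_in E A M -> span_in E A (x *: M).
Proof.
move=> xE [a [aE ->]]; exists (fun j => x * a j).
split=> [j|]; first by rewrite rpredM.
by rewrite scaler_sumr; apply: eq_bigr => j _; rewrite scalerA.
Qed.

Lemma span_sum (I : finType) (P : pred I) (F : I -> 'M[CC]_v) :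
  (forall i, P i -> span_in E A (F i)) -> span_in E A (\sum_(i | P i) F i).
Proof. by move=> spanF; apply: big_ind => //; [apply: span0 | apply: spanD]. Qed.

(* The structure constants of the scheme are entries of [A i *m A j], hence
   natural numbers, which lie in every semiring. *)
Lemma span_mulA i j : cspan A (A i *m A j) -> span_in E A (A i *m A j).
Proof.
case=> c [_ def_c]; exists c; split=> // k.
rewrite -(coord_comb c k) -def_c /coord mxE rpred_sum // => l _.
by rewrite !A_rho rpredM ?rpred_nat.
Qed.

Lemma span_mul M N : (forall i j, cspan A (A i *m A j)) ->
  span_in E A M -> span_in E A N -> span_in E A (M *m N).
Proof.
move=> A_mul [a [aE ->]] [b [bE ->]].
rewrite mulmx_suml; apply: span_sum => i _.
rewrite mulmx_sumr; apply: span_sum => j _.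
by rewrite -scalemxAl -scalemxAr; do 2?apply: spanZ => //; apply: span_mulA.
Qed.

End Span.

Section SchurAutomorphism.

Variables (E : semiringClosed CC) (psi : 'M[CC]_v -> 'M[CC]_v).
Hypothesis psi_span : forall M, span_in E A M -> span_in E A (psi M).
Hypothesis psi_lin : forall a M N, a \in E -> span_in E A M -> span_in E A N ->
  psi (a *: M + N) = a *: psi M + psi N.
Hypothesis psi_inj : forall M N, span_in E A M -> span_in E A N ->
  psi M = psi N -> M = N.
Hypothesis psi_schur : forall M N, span_in E A M -> span_in E A N ->
  psi (schur M N) = schur (psi M) (psi N).

Lemma psi0 : psi 0 = 0.
Proof.
have := psi_lin (rpred1 E) (span0 E) (span0 E).
rewrite !scale1r !addr0 => psi0D.
by apply: (addrI (psi 0)); rewrite addr0 -psi0D.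
Qed.

Lemma psi_comb c : (forall j, c j \in E) ->
  psi (\sum_j c j *: A j) = \sum_j c j *: psi (A j).
Proof.
move=> cE; pose P M N := span_in E A M /\ psi M = N.
suff [] : P (\sum_j c j *: A j) (\sum_j c j *: psi (A j)) by [].
apply: (big_rec2 P); first exact: (conj (span0 E) psi0).
move=> j M _ _ [spanM <-].
have spanZA : span_in E A (c j *: A j) by apply: spanZ => //; apply: spanA.
by split; [apply: spanD | rewrite psi_lin //; apply: spanA].
Qed.

Lemma psi_permutes_A :
  exists2 sg, injective sg & forall i, psi (A i) = A (sg i).
Proof.
pose c i := coord (psi (A i)).
have psiAE i : psi (A i) = \sum_k c i k *: A k.
  by case: (span_in_coord (psi_span (spanA E i))).
have coord_schur_psi i j k : coord (psi (schur (A i) (A j))) k = c i k * c j k.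
  by rewrite psi_schur; [rewrite /coord /schur mxE | apply: spanA..].
have c_idem i k : c i k * c i k = c i k.
  by rewrite -coord_schur_psi schur_A eqxx scale1r.
have c_orth i j k : i != j -> c i k * c j k = 0.
  move=> /negPf ij.
  by rewrite -coord_schur_psi schur_A ij scale0r psi0 /coord mxE.
have c_neq0 i : exists k, c i k != 0.
  apply/existsP; apply: contraT; rewrite negb_exists => /forallP c0.
  have : psi (A i) = psi 0.
    by rewrite psi0 psiAE big1 // => k _; rewrite (eqP (negbNE (c0 k))) scale0r.
  move/psi_inj => /(_ (spanA E i) (span0 E))/(congr1 (coord^~ i)).
  by rewrite coord_A eqxx /coord mxE => /eqP; rewrite oner_eq0.
have [sg sg_inj c_sg] := orthogonal_idempotents_perm c_idem c_orth c_neq0.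
exists sg => // i; rewrite psiAE -(sum_scale_delta A).
by apply: eq_bigr => k _; rewrite c_sg.
Qed.

End SchurAutomorphism.

End SchemeCoordinates.

Lemma fconnect_comm (T : finType) (f g : T -> T) x y :
  (forall z, g (f z) = f (g z)) -> fconnect f x y -> fconnect f (g x) (g y).
Proof.
move=> gf /iter_findex <-.
have -> n : g (iter n f x) = iter n f (g x).
  by elim: n => //= n IHn; rewrite gf IHn.
exact: fconnect_iter.
Qed.

Section OrbitLabels.

Variables (n : nat) (f : 'I_n.+1 -> 'I_n.+1).
Hypotheses (f_inj : injective f) (f0 : f ord0 = ord0).

(* One root per orbit of [f], the orbit [{ord0}] first; orbits are indexed by
   their position in this list. *)
Definition nonzero_orbit_roots :=
  [seq x <- enum 'I_n.+1 | (froot f x == x) && (x != ord0)].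
Definition orbit_roots := ord0 :: nonzero_orbit_roots.
Definition nonzero_orbits := size nonzero_orbit_roots.
Definition orbit_label j : 'I_nonzero_orbits.+1 :=
  inord (index (froot f j) orbit_roots).
Definition orbit_rep (k : 'I_nonzero_orbits.+1) := nth ord0 orbit_roots k.

Let f_sym := fconnect_sym f_inj.

Lemma fconnect0f j : fconnect f ord0 j = (j == ord0).
Proof.
apply/idP/eqP => [/iter_findex <-|->]; first exact: iter_fix.
exact: connect0.
Qed.

Lemma froot_in_roots j : froot f j \in orbit_roots.
Proof.
rewrite inE; case: eqVneq => //= rj0.
by rewrite mem_filter mem_enum (root_root f_sym) eqxx rj0.
Qed.

Lemma froot_orbit_root x : x \in orbit_roots -> froot f x = x.
Proof.
rewrite inE mem_filter => /orP[/eqP ->|/andP[/andP[/eqP //]]].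
by apply/eqP; rewrite -fconnect0f connect_root.
Qed.

Lemma uniq_orbit_roots : uniq orbit_roots.
Proof. by rewrite /= filter_uniq ?enum_uniq // mem_filter eqxx !andbF. Qed.

Lemma orbit_labelK j : orbit_rep (orbit_label j) = froot f j.
Proof.
have label_lt : (index (froot f j) orbit_roots < nonzero_orbits.+1)%N.
  by have := froot_in_roots j; rewrite -index_mem.
by rewrite /orbit_rep inordK // nth_index ?froot_in_roots.
Qed.

Lemma orbit_rep_inj : injective orbit_rep.
Proof.
move=> k l /eqP; rewrite nth_uniq ?uniq_orbit_roots ?ltn_ord //.
by move/eqP/val_inj.
Qed.

Lemma orbit_label_eq i j : (orbit_label i == orbit_label j) = fconnect f i j.
Proof.
by rewrite -(inj_eq orbit_rep_inj) !orbit_labelK (root_connect f_sym).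
Qed.

Lemma orbit_label_f j : orbit_label (f j) = orbit_label j.
Proof. by apply/eqP; rewrite orbit_label_eq f_sym fconnect1. Qed.

Lemma orbit_repK : cancel orbit_rep orbit_label.
Proof.
by move=> k; apply: orbit_rep_inj; rewrite orbit_labelK froot_orbit_root ?mem_nth.
Qed.

Lemma orbit_label_eq0 j : (orbit_label j == ord0) = (j == ord0).
Proof.
have label0 : orbit_label ord0 = ord0.
  apply: val_inj; rewrite /orbit_label froot_orbit_root ?mem_head //=.
  by rewrite ?eqxx inordK.
by rewrite -label0 orbit_label_eq f_sym fconnect0f.
Qed.

End OrbitLabels.

Section FusionByLabels.

Variables (v d e : nat) (A : 'I_d.+1 -> 'M[CC]_v) (lab : 'I_d.+1 -> 'I_e.+1).
Variable rep : 'I_e.+1 -> 'I_d.+1.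
Hypothesis repK : cancel rep lab.

Definition label_classes k := [set j | lab j == k].

Lemma fusion_comb (b : 'I_e.+1 -> CC) :
  \sum_k b k *: fusion A label_classes k = \sum_j b (lab j) *: A j.
Proof.
rewrite (partition_big lab predT) //=; apply: eq_bigr => k _.
by rewrite scaler_sumr; apply: eq_big => [j|j]; rewrite inE // => /eqP ->.
Qed.

Lemma fusion_delta k : fusion A label_classes k = \sum_j (lab j == k)%:R *: A j.
Proof. by rewrite -(fusion_comb (fun l => (l == k)%:R)) sum_scale_delta. Qed.

Lemma sum_fusion : \sum_k fusion A label_classes k = \sum_j A j.
Proof.
transitivity (\sum_k 1 *: fusion A label_classes k).
  by apply: eq_bigr => k _; rewrite scale1r.
by rewrite fusion_comb; apply: eq_bigr => j _; rewrite scale1r.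
Qed.

Lemma fusion_mulC : (forall i j, A i *m A j = A j *m A i) ->
  forall k l, fusion A label_classes k *m fusion A label_classes l =
              fusion A label_classes l *m fusion A label_classes k.
Proof.
move=> A_comm k l; rewrite /fusion mulmx_suml.
under eq_bigr do rewrite mulmx_sumr.
rewrite mulmx_suml exchange_big /=; apply: eq_bigr => i _.
by rewrite mulmx_sumr; apply: eq_bigr => j _; apply: A_comm.
Qed.

Lemma fusion_tr (tau : 'I_d.+1 -> 'I_d.+1) :
  (forall i, (A i)^T = A (tau i)) -> involutive tau ->
  (forall i j, (lab (tau i) == lab (tau j)) = (lab i == lab j)) ->
  forall k, exists l, (fusion A label_classes k)^T = fusion A label_classes l.
Proof.
move=> A_tr tauK lab_tau k; exists (lab (tau (rep k))).
rewrite /fusion linear_sum (reindex_inj (inv_inj tauK)) /=.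
apply: eq_big => [j|j _]; last by rewrite A_tr tauK.
by rewrite !inE -{1}(repK k) -lab_tau tauK.
Qed.

Lemma label_subscheme : (forall j, (lab j == ord0) = (j == ord0)) ->
  is_assoc_scheme (fusion A label_classes) -> is_subscheme A label_classes.
Proof.
move=> lab0 fusion_scheme; split=> //.
- by apply/setP=> j; rewrite !inE lab0.
- by move=> k; apply/set0Pn; exists (rep k); rewrite inE repK.
- by move=> j; exists (lab j); rewrite inE.
move=> k l kl; apply/pred0P => j /=; rewrite !inE; apply/negbTE.
by apply: contra kl => /andP[/eqP <- /eqP <-].
Qed.

End FusionByLabels.

Lemma zero_one_partition v n (A : 'I_n -> 'M[CC]_v) :
  (forall i r s, A i r s = 0 \/ A i r s = 1) -> \sum_i A i = const_mx 1 ->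
  exists rho : 'I_v -> 'I_v -> 'I_n, forall i r s, A i r s = (i == rho r s)%:R.
Proof.
move=> A01 A_sum.
have sum_entry r s : \sum_i A i r s = 1 by rewrite -summxE A_sum mxE.
have A_ge0 r s i : 0 <= A i r s by case: (A01 i r s) => ->; rewrite ?ler01.
have rho_ex r s : exists i, A i r s = 1.
  case: (pickP (fun i => A i r s == 1)) => [i /eqP|not1]; first by exists i.
  have := sum_entry r s; rewrite big1 => [/eqP|i _].
    by rewrite eq_sym oner_eq0.
  by case: (A01 i r s) => // Ai1; have := not1 i; rewrite Ai1 eqxx.
have [rho rhoP] := fin_all_exists (fun r => fin_all_exists (rho_ex r)).
exists rho => i r s; case: eqVneq => [->|i_rho]; first by rewrite rhoP.
have := sum_entry r s; rewrite (bigD1 (rho r s)) //= rhoP.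
move/eqP; rewrite addrC -subr_eq0 addrK => /eqP sum0.
by apply: (psumr_eq0P _ sum0) => // j _; apply: A_ge0.
Qed.

Lemma relation_cells v n (A : 'I_n -> 'M[CC]_v) (rho : 'I_v -> 'I_v -> 'I_n) :
  (forall i r s, A i r s = (i == rho r s)%:R) -> (forall i, A i != 0) ->
  exists cell : 'I_n -> 'I_v * 'I_v, forall k, rho (cell k).1 (cell k).2 = k.
Proof.
move=> A_rho A_neq0.
suff cell_ex k : exists p : 'I_v * 'I_v, rho p.1 p.2 = k.
  exact: fin_all_exists cell_ex.
case: (pickP (fun p : 'I_v * 'I_v => rho p.1 p.2 == k)) => [p /eqP|none].
  by exists p.
case/negP: (A_neq0 k); apply/eqP/matrixP => r s.
by rewrite !mxE A_rho eq_sym (none (r, s)).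
Qed.

Section FixedSpace.

Variables (v d : nat) (A : 'I_d.+1 -> 'M[CC]_v).
Variable rho : 'I_v -> 'I_v -> 'I_d.+1.
Hypothesis A_rho : forall i r s, A i r s = (i == rho r s)%:R.
Variable cell : 'I_d.+1 -> 'I_v * 'I_v.
Hypothesis rho_cell : forall k, rho (cell k).1 (cell k).2 = k.
Variable tau : 'I_d.+1 -> 'I_d.+1.
Hypotheses (A0 : A ord0 = 1%:M) (A_sum : \sum_i A i = const_mx 1).
Hypotheses (A_tr : forall i, (A i)^T = A (tau i))
           (A_comm : forall i j, A i *m A j = A j *m A i)
           (A_mul : forall i j, cspan A (A i *m A j)).

Variables (E : semiringClosed CC) (psi : 'M[CC]_v -> 'M[CC]_v).
Hypothesis psi_lin : forall a M N, a \in E -> span_in E A M -> span_in E A N ->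
  psi (a *: M + N) = a *: psi M + psi N.
Hypothesis psi_surj : forall N, span_in E A N ->
  exists2 M, span_in E A M & psi M = N.
Hypothesis psi_mul : forall M N, span_in E A M -> span_in E A N ->
  psi (M *m N) = psi M *m psi N.
Hypothesis psi_ctr : forall M, span_in E A M -> psi (ctrmx M) = ctrmx (psi M).
Variable sg : 'I_d.+1 -> 'I_d.+1.
Hypotheses (sg_inj : injective sg) (psiA : forall i, psi (A i) = A (sg i)).

Lemma sg0 : sg ord0 = ord0.
Proof.
have [M spanM psiM] := psi_surj (spanA A E ord0).
have := psi_mul (spanA A E ord0) spanM.
by rewrite A0 mul1mx psiM -A0 psiA A0 mulmx1 -{1}A0 => /(A_inj A_rho rho_cell).
Qed.

Lemma tauK : involutive tau.
Proof. by move=> i; apply: (A_inj A_rho rho_cell); rewrite -!A_tr trmxK. Qed.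

Lemma tau_sg j : tau (sg j) = sg (tau j).
Proof.
apply: (A_inj A_rho rho_cell).
rewrite -A_tr -(ctrmx_A A_rho) -psiA -psi_ctr; last exact: spanA.
by rewrite (ctrmx_A A_rho) A_tr psiA.
Qed.

Lemma psi_comb_perm c : (forall j, c j \in E) ->
  psi (\sum_j c j *: A j) = \sum_j c j *: A (sg j).
Proof.
by move=> cE; rewrite (psi_comb psi_lin) //; under eq_bigr do rewrite psiA.
Qed.

Local Notation lab := (orbit_label sg).
Local Notation Cl := (label_classes lab).

Lemma fixed_space_fusion M :
  (span_in E A M /\ psi M = M) <-> span_in E (fusion A Cl) M.
Proof.
split=> [[spanM psiM]|[b [bE ->]]]; last first.
  have blabE j : b (lab j) \in E := bE (lab j).
  rewrite fusion_comb; split; first by exists (fun j => b (lab j)).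
  rewrite psi_comb_perm // [RHS](reindex_inj sg_inj); apply: eq_bigr => j _.
  by rewrite (orbit_label_f sg_inj).
have [defM cE] := span_in_coord A_rho rho_cell spanM.
set c := coord cell M in defM cE.
have c_sg j : c (sg j) = c j.
  have := coord_comb_perm A_rho rho_cell c j sg_inj.
  by rewrite -psi_comb_perm // -defM psiM.
exists (fun k => c (orbit_rep k)); split=> [k|]; first exact: cE.
rewrite fusion_comb {1}defM; apply: eq_bigr => j _; congr (_ *: _).
apply: (fconnect_invariant (f := sg)) => [i|]; first exact/eqP.
by rewrite -(orbit_label_eq sg_inj) (orbit_repK sg_inj sg0).
Qed.

Lemma fusion_fixed k :
  span_in E A (fusion A Cl k) /\ psi (fusion A Cl k) = fusion A Cl k.
Proof.
apply/fixed_space_fusion; exists (fun l => (l == k)%:R).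
by rewrite sum_scale_delta; split=> // l; apply: rpred_nat.
Qed.

Lemma fusion_entry k r s : fusion A Cl k r s = (lab (rho r s) == k)%:R.
Proof. by rewrite fusion_delta (comb_entry A_rho). Qed.

Lemma fusion_scheme : is_assoc_scheme (fusion A Cl).
Proof.
have lab0 := orbit_label_eq0 sg_inj sg0.
do ![split].
- by move=> k r s; rewrite fusion_entry; case: (_ == _); [right | left].
- move=> k; pose p := cell (orbit_rep k); apply/eqP => /matrixP/(_ p.1 p.2)/eqP.
  by rewrite fusion_entry rho_cell (orbit_repK sg_inj sg0) eqxx mxE oner_eq0.
- rewrite fusion_delta -A0 -(sum_scale_delta A); apply: eq_bigr => j _.
  by rewrite lab0.
- by rewrite sum_fusion.
- apply: (fusion_tr (orbit_repK sg_inj sg0) A_tr tauK) => i j.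
  rewrite !(orbit_label_eq sg_inj); apply/idP/idP.
    by move/(fconnect_comm tau_sg); rewrite !tauK.
  exact: fconnect_comm tau_sg.
- exact: fusion_mulC.
move=> k l; have [spank psik] := fusion_fixed k.
have [spanl psil] := fusion_fixed l.
have [|b [_ defkl]] := (fixed_space_fusion (fusion A Cl k *m fusion A Cl l)).1.
  by split; [apply: span_mul | rewrite psi_mul // psik psil].
by exists b.
Qed.

Lemma fixed_fusion_subscheme : is_subscheme A Cl.
Proof.
exact: label_subscheme (orbit_repK sg_inj sg0) (orbit_label_eq0 sg_inj sg0)
  fusion_scheme.
Qed.

End FixedSpace.

Theorem lemma3p4 (v d : nat) (A : 'I_d.+1 -> 'M[CC]_v) (E : {pred CC})
    (psi : 'M[CC]_v -> 'M[CC]_v) :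
  is_assoc_scheme A ->
  conj_closed_subfield E ->
  splitting_field_in A E ->
  BM_automorphism E A psi ->
  exists (e : nat) (Cl : 'I_e.+1 -> {set 'I_d.+1}),
    is_subscheme A Cl /\
    (forall M : 'M[CC]_v,
       (span_in E A M /\ psi M = M) <-> span_in E (fusion A Cl) M).
Proof.
move=> [A01 [A_neq0 [A0 [A_sum [A_tr [A_comm A_mul]]]]]] [E_divring _] _.
move=> [psi_span [psi_lin [psi_inj [psi_surj [psi_mul [psi_schur psi_ctr]]]]]].
pose S : semiringClosed CC :=
  HB.pack E (GRing.isDivringClosed.Build CC E E_divring).
have [rho A_rho] := zero_one_partition A01 A_sum.
have [cell rho_cell] := relation_cells A_rho A_neq0.
have [tau A_tau] := fin_all_exists A_tr.
have [sg sg_inj psiA] :=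
  psi_permutes_A (E := S) A_rho rho_cell psi_span psi_lin psi_inj psi_schur.
exists (nonzero_orbits sg), (label_classes (orbit_label sg)); split.
  exact: (fixed_fusion_subscheme (E := S) A_rho rho_cell A0 A_sum A_tau A_comm
    A_mul psi_lin psi_surj psi_mul psi_ctr sg_inj psiA).
exact: (fixed_space_fusion (E := S) A_rho rho_cell A0 psi_lin psi_surj psi_mul
  sg_inj psiA).
Qed.
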